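(* Let $n$ be a prime and let $g<n$ be a positive integer which is a generator of $U(\mathbb Z/n\mathbb Z)$. Let $A=g\text{-}circ(a_1,\dots,a_n)$, let $\Phi(A)=(a_1,a_2,\dots,a_n)^T$ be its first row and $\Upsilon(A)=(A_{11},A_{22},\dots,A_{nn})^T$ the vector of its diagonal entries. Then $$\Upsilon(A)=Q_{n-g+1}\,\Phi(A).$$
   Context: $g\text{-}circ(a_1,\dots,a_n)$ is the $n\times n$ matrix whose $(i,j)$ entry is $a_{j-(i-1)g}$ (subscripts taken modulo $n$ in $\{1,\dots,n\}$), i.e. each row is the preceding row cyclically shifted $g$ places to the right. For an integer $h$, $Q_h$ is the $n\times n$ permutation matrix whose $(i,j)$ entry is $1$ if $j\equiv 1+(i-1)h\pmod n$ and $0$ otherwise. *)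

From HB Require Import structures.
From mathcomp Require Import all_boot all_order all_algebra all_fingroup.
Set Implicit Arguments. Unset Strict Implicit. Unset Printing Implicit Defensive.
Import GRing.Theory.
Local Open Scope ring_scope.

(* Indices 1..n of the paper are represented by 'I_n = {0,...,n-1}
   (paper index i corresponds to ordinal i-1). *)

(* the element of 'I_n with value k mod n (n > 0 witnessed by any i0 : 'I_n) *)
Definition ord_mod (n k : nat) (i0 : 'I_n) : 'I_n :=
  Ordinal (ltn_pmod k (leq_ltn_trans (leq0n i0) (ltn_ord i0))).

(* g-circ(a_1,...,a_n): (i,j) entry a_{j-(i-1)g}, subscripts mod n.
   0-based: A i j = a ((j - i*g) mod n), computed in nat as
   (j + (n - (i*g mod n))) mod n. *)
Definition gcirc (R : Type) (n g : nat) (a : 'I_n -> R) : 'M[R]_n :=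
  \matrix_(i < n, j < n) a (ord_mod (j + (n - (i * g) %% n)) i).

(* Q_h: (i,j) entry 1 iff j = 1 + (i-1) h mod n; 0-based: j = i*h mod n. *)
Definition Qmat (R : nzRingType) (n h : nat) : 'M[R]_n :=
  \matrix_(i < n, j < n) (j == ord_mod (i * h) i)%:R.

Definition Phi (R : Type) (n : nat) (A : 'M[R]_n) : 'cV[R]_n :=
  \col_(j < n) A (ord_mod 0 j) j.

Definition Upsilon (R : Type) (n : nat) (A : 'M[R]_n) : 'cV[R]_n :=
  \col_(i < n) A i i.

Definition unit_generator (n g : nat) : Prop :=
  exists u : {unit 'Z_n},
    val u = (g%:R : 'Z_n) /\ (<[u]> = [set: {unit 'Z_n}])%g.

From HB Require Import structures.
From mathcomp Require Import all_boot all_order all_algebra all_fingroup.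
From mathcomp Require Import zify.
Import GRing.Theory.
Local Open Scope ring_scope.

(* The diagonal entry A_ii of a g-circulant is a_{i-(i-1)g}, and
   i - (i-1)g = 1 + (i-1)(n-g+1) (mod n): this is exactly the entry of the
   first row that row i of Q_{n-g+1} selects. *)

Lemma modn_diag_gcirc (n g i : nat) : (0 < n)%N -> (g <= n)%N ->
  (i + (n - (i * g) %% n) = i * (n - g + 1) %[mod n])%N.
Proof.
move=> n_gt0 le_gn; apply/eqP; rewrite -(eqn_modDr (i * g)).
have lt_mod := ltn_pmod (i * g) n_gt0.
have -> : (i * (n - g + 1) + i * g = i * n + i)%N.
  by rewrite -mulnDr (_ : (n - g + 1 + g = n.+1)%N) ?mulnSr //; lia.
rewrite -modnDmr (_ : (i + (n - (i * g) %% n) + (i * g) %% n = i + n)%N); last lia.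
by rewrite modnDr modnMDl.
Qed.

Lemma Phi_gcirc (R : Type) (n g : nat) (a : 'I_n -> R) :
  Phi (gcirc g a) = \col_j a j.
Proof.
apply/matrixP => j k; rewrite !mxE; congr (a _); apply: val_inj.
by rewrite /= mod0n mul0n mod0n subn0 modnDr modn_small.
Qed.

Lemma Upsilon_gcirc (R : Type) (n g : nat) (a : 'I_n -> R) : (g <= n)%N ->
  Upsilon (gcirc g a) = \col_i a (ord_mod (i * (n - g + 1)) i).
Proof.
move=> le_gn; apply/matrixP => i k; rewrite !mxE; congr (a _); apply: val_inj.
by rewrite /= modn_diag_gcirc // (leq_ltn_trans _ (ltn_ord i)).
Qed.

Lemma mul_Qmat_col (R : nzRingType) (n h : nat) (v : 'I_n -> R) :
  Qmat R n h *m (\col_j v j) = \col_i v (ord_mod (i * h) i).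
Proof.
apply/matrixP => i k; rewrite !mxE (bigD1 (ord_mod (i * h) i)) //= big1.
  by rewrite !mxE eqxx mul1r addr0.
by move=> j /negbTE ne_j; rewrite !mxE ne_j mul0r.
Qed.

Theorem mainTheorem8 (R : nzRingType) (n g : nat) (a : 'I_n -> R) :
  prime n -> (0 < g)%N -> (g < n)%N -> unit_generator n g ->
  Upsilon (gcirc g a) = Qmat R n (n - g + 1) *m Phi (gcirc g a).
Proof.
move=> _ _ lt_gn _.
by rewrite Phi_gcirc mul_Qmat_col Upsilon_gcirc // ltnW.
Qed.
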